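(* Let $f\colon X\to X$ be a piecewise $\lambda$-contraction. If $\mathscr{C}=\{C_j\}_{j\in\Lambda}$ is a strongly invariant collection of pairwise disjoint open subsets of $X$, then there exist periodic orbits $\gamma_1,\dots,\gamma_r$ of $f$ contained in $\bigcup_{j\in\Lambda}C_j$ such that $\omega(f,y)\in\{\gamma_1,\dots,\gamma_r\}$ for every $y\in\bigcup_{j\in\Lambda}C_j$.
   Context: $(X,d)$ is a compact metric space whose open balls are connected, with $\mathrm{diam}(X)>0$, and $\lambda\in(0,1)$. A piecewise $\lambda$-contraction $f$: there exist $N\in\mathbb{N}$, open connected pairwise disjoint $A_1,\dots,A_N\subset X$ with dense union, and bi-Lipschitz $\varphi_i\colon X\to X$ with Lipschitz constant $\le\lambda$, $f|_{A_i}=\varphi_i|_{A_i}$. A collection $\mathscr{C}=\{C_j\}_{j\in\Lambda}$ of finitely many pairwise disjoint subsets of $X$ is strongly invariant if there is $n_0\ge1$ such that: (i) for each $A\in\mathscr{C}$ there is $A'\in\mathscr{C}$ with $f(A)\subset A'$; (ii) for each $B\in\mathscr{C}$ and $n\ge n_0$ there is $B'\in\mathscr{C}$ with $\overline{f^n(B)}\subset B'$; (iii) each $C\in\mathscr{C}$ is contained in some $A_i$. $\omega(f,y)=\bigcap_{m\ge1}\overline{\bigcup_{n\ge m}\{f^n(y)\}}$. *)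

From HB Require Import structures.
From mathcomp Require Import all_boot all_order all_algebra.
From mathcomp Require Import all_classical all_reals all_analysis.
Unset Implicit Arguments. Unset Printing Implicit Defensive.
Import Order.TTheory GRing.Theory Num.Theory.
Local Open Scope classical_set_scope.
Local Open Scope ring_scope.

Section defs.
Context {R : realType} {X : metricType R}.

Definition bi_lipschitz_le (lam : R) (phi : X -> X) : Prop :=
  (forall x y, mdist (phi x) (phi y) <= lam * mdist x y) /\
  (exists c : R, 0 < c /\ forall x y, c * mdist x y <= mdist (phi x) (phi y)).

Definition pc_data (lam : R) (f : X -> X) (N : nat) (A : 'I_N -> set X)
    (phi : 'I_N -> X -> X) : Prop :=
  [/\ forall i, open (A i) /\ connected (A i),
      forall i j, i != j -> A i `&` A j = set0,
      closure (\bigcup_i A i) = setT,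
      forall i, bi_lipschitz_le lam (phi i)
    & forall i x, A i x -> f x = phi i x].

Definition piecewise_contraction (lam : R) (f : X -> X) : Prop :=
  exists N (A : 'I_N -> set X) (phi : 'I_N -> X -> X), pc_data lam f N A phi.

Definition strongly_invariant (f : X -> X) (N : nat) (A : 'I_N -> set X)
    (k : nat) (C : 'I_k -> set X) : Prop :=
  [/\ forall j j', j != j' -> C j `&` C j' = set0,
      forall j, exists j', f @` C j `<=` C j',
      exists n0 : nat, (1 <= n0)%N /\
        forall j (n : nat), (n0 <= n)%N ->
          exists j', closure (iter n f @` C j) `<=` C j'
    & forall j, exists i, C j `<=` A i].

Definition omega_limit (f : X -> X) (y : X) : set X :=
  [set x | forall m : nat, (1 <= m)%N ->
     closure [set iter n f y | n in [set n : nat | (m <= n)%N]] x].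

Definition periodic_orbit (f : X -> X) (g : set X) : Prop :=
  exists (x : X) (p : nat), [/\ (0 < p)%N, iter p f x = x &
     g = [set iter n f x | n in [set n : nat | (n < p)%N]]].

End defs.

From HB Require Import structures.
From mathcomp Require Import all_boot all_order all_algebra.
From mathcomp Require Import all_classical all_reals all_analysis.
From mathcomp Require Import lra zify.
Import Order.TTheory GRing.Theory Num.Theory.
Local Open Scope classical_set_scope.
Local Open Scope ring_scope.

(* f maps each C j into C (sig j) and is a lam-contraction there. The
   itinerary j, sig j, sig^2 j, ... in the finite index set is eventually
   periodic: sig^p fixes j1 = sig^t j. For z in C j1, a cluster point w of
   (f^(m p) z)_m exists by compactness, lies in C j1 because of the closure
   condition of strong invariance, and is fixed by f^p since f^p is a
   lam^p-contraction on C j1. Every y in C j then shadows the cycle of w,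
   d(f^(n + t) y, f^n w) <= lam^n d(f^t y, w), so its omega-limit set is that
   cycle; one cycle per piece gives finitely many. *)

Lemma iter_modn {T : Type} {h : T -> T} {p : nat} {w : T} :
  iter p h w = w -> forall n, iter n h w = iter (n %% p) h w.
Proof.
move=> hp n; rewrite {1}(divn_eq n p); elim: (n %/ p)%N => [|m IH].
  by rewrite mul0n add0n.
by rewrite mulSn -addnA addnC iterD hp IH.
Qed.

Lemma iter_eventually_periodic {T : finType} (g : T -> T) (x : T) :
  exists t p, (0 < p)%N /\ iter p g (iter t g x) = iter t g x.
Proof.
have /existsNP [i1 /existsNP [i2 /not_implyP [e ne]]] :
    ~ injective (fun i : 'I_#|T|.+1 => iter i g x).
  by move=> /leq_card; rewrite card_ord ltnn.
have periodic a b : (a < b)%N -> iter a g x = iter b g x ->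
    exists t p, (0 < p)%N /\ iter p g (iter t g x) = iter t g x.
  move=> ab eab; exists a, (b - a)%N; split; first by rewrite subn_gt0.
  by rewrite -iterD subnK 1?ltnW.
case: (ltngtP i1 i2) => [lt12|lt21|eq12].
- exact: periodic lt12 e.
- exact: periodic lt21 (esym e).
- by case: ne; apply: val_inj.
Qed.

Lemma geometric_eventually_lt {R : realType} (lam D e : R) :
  0 <= lam < 1 -> 0 < e -> exists N, forall n, (N <= n)%N -> lam ^+ n * D < e.
Proof.
move=> /andP[l0 l1] e0.
have D1 : 0 < `|D| + 1 by rewrite ltr_pwDr // normr_ge0.
have := @cvg_expr R lam; rewrite ger0_norm // => /(_ l1).
move=> /cvgr0_norm_lt /(_ (e / (`|D| + 1))) [|N _ HN]; first by rewrite divr_gt0.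
exists N => n /HN; rewrite normrX ger0_norm // => small.
apply: (le_lt_trans (ler_norm _)); rewrite normrM normrX ger0_norm //.
apply: (@le_lt_trans _ _ (lam ^+ n * (`|D| + 1))); last by rewrite -ltr_pdivlMr.
by rewrite ler_wpM2l ?exprn_ge0 // lerDl.
Qed.

Section metric.
Context {R : realType} {X : metricType R}.

Lemma closure_mdistP (A : set X) (x : X) :
  closure A x <-> forall e, 0 < e -> exists2 a, A a & mdist x a < e.
Proof.
split.
- move=> clA e e0; have [a [Aa]] := clA _ (nbhsx_ballx x _ e0).
  by rewrite ballEmdist => xa; exists a.
- move=> near B /nbhs_ballP [e /= e0 sB].
  have [a Aa xa] := near e e0; exists a; split => //; apply: sB.
  by rewrite ballEmdist.
Qed.

Lemma cluster_seq_mdist {u : nat -> X} {w : X} : cluster (u @ \oo) w ->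
  forall e, 0 < e -> forall N, exists2 m, (N <= m)%N & mdist w (u m) < e.
Proof.
move=> clw e e0 N.
have tail : (u @ \oo) [set u m | m in [set m | (N <= m)%N]].
  by exists N => // m Nm; exists m.
have [_ [[m Nm <-]]] := clw _ _ tail (nbhsx_ballx w _ e0).
by rewrite ballEmdist => wm; exists m.
Qed.

Lemma mdist_lb_finite (x : X) (o : nat -> X) (p : nat) :
  (forall s, (s < p)%N -> x <> o s) ->
  exists2 d, 0 < d & forall s, (s < p)%N -> d <= mdist x (o s).
Proof.
elim: p => [|p IH] xo; first by exists 1.
have [d d0 hd] := IH (fun s sp => xo s (ltnW sp)).
have xop : 0 < mdist x (o p) by rewrite mdist_gt0; apply/eqP; apply: xo.
exists (Num.min d (mdist x (o p))); first by rewrite lt_min d0.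
move=> s; rewrite ltnS leq_eqVlt => /orP[/eqP ->|sp].
  by rewrite ge_min lexx orbT.
by rewrite ge_min hd.
Qed.

Definition iter_cycle (f : X -> X) (p : nat) (w : X) : set X :=
  [set iter n f w | n in [set n : nat | (n < p)%N]].

Lemma periodic_orbit_iter_cycle (f : X -> X) (p : nat) (w : X) :
  (0 < p)%N -> iter p f w = w -> periodic_orbit f (iter_cycle f p w).
Proof. by move=> p0 fw; exists w, p. Qed.

Lemma omega_limit_shadowing (f : X -> X) (y w : X) (t p : nat) :
  (0 < p)%N -> iter p f w = w ->
  (forall e, 0 < e -> exists N, forall n, (N <= n)%N ->
     mdist (iter (n + t) f y) (iter n f w) < e) ->
  omega_limit f y = iter_cycle f p w.
Proof.
move=> p0 fw shadow; have per := iter_modn fw.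
apply/seteqP; split=> [x omx|_ [s sp <-] m m1].
- apply: contrapT => xNcycle.
  have [d d0 hd] : exists2 d, 0 < d &
      forall s, (s < p)%N -> d <= mdist x (iter s f w).
    by apply: mdist_lb_finite => s sp xs; apply: xNcycle; exists s.
  have d20 : 0 < d / 2 by rewrite divr_gt0.
  have [N hN] := shadow _ d20.
  have /closure_mdistP /(_ _ d20) [_ [n /= tNn <-] xn] := omx (t + N).+1 isT.
  have Nn : (N <= n - t)%N by lia.
  have close := hN _ Nn; rewrite subnK in close; last by lia.
  have := hd _ (ltn_pmod (n - t) p0); rewrite -per => far.
  have := metric_triangle x (iter n f y) (iter (n - t) f w).
  lra.
- apply/closure_mdistP => e e0; have [N hN] := shadow e e0.
  pose n := ((m + N) * p + s)%N.
  have mNn : (m + N <= n)%N by rewrite (leq_trans (leq_pmulr _ p0)) ?leq_addr.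
  exists (iter (n + t) f y); first by exists (n + t)%N => //=; lia.
  have -> : iter s f w = iter n f w by rewrite [RHS]per modnMDl modn_small.
  by rewrite metric_sym hN //; lia.
Qed.

End metric.

Section pieces.
Context {R : realType} {X : metricType R}.
Context {lam : R} {f : X -> X} {k : nat} {C : 'I_k -> set X}
  {sig : 'I_k -> 'I_k}.
Hypothesis lam01 : 0 <= lam < 1.
Hypothesis f_pieces : forall j, f @` C j `<=` C (sig j).
Hypothesis f_contracts : forall j a b, C j a -> C j b ->
  mdist (f a) (f b) <= lam * mdist a b.

Lemma iter_pieces n {j a} : C j a -> C (iter n sig j) (iter n f a).
Proof.
elim: n j a => [//|n IH] j a Ca /=.
by apply: f_pieces; exists (iter n f a) => //; apply: IH.
Qed.

Lemma iter_pieces_period j p m a : iter p sig j = j -> C j a ->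
  C j (iter (m * p) f a).
Proof.
move=> sigj Ca; have := iter_pieces (m * p) Ca.
by rewrite (iter_modn sigj) modnMl.
Qed.

Lemma mdist_iter_pieces n {j a b} : C j a -> C j b ->
  mdist (iter n f a) (iter n f b) <= lam ^+ n * mdist a b.
Proof.
have l0 : 0 <= lam by case/andP: lam01.
elim: n j a b => [|n IH] j a b Ca Cb /=; first by rewrite expr0 mul1r.
apply: le_trans (f_contracts _ _ _ (iter_pieces n Ca) (iter_pieces n Cb)) _.
by rewrite exprS -mulrA ler_wpM2l // (IH j).
Qed.

Lemma omega_limit_pieces {j t p w y} : (0 < p)%N ->
  C (iter t sig j) w -> iter p f w = w -> C j y ->
  omega_limit f y = iter_cycle f p w.
Proof.
move=> p0 Cw fw Cy; apply: (omega_limit_shadowing f y w t p p0 fw) => e e0.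
have [N hN] := geometric_eventually_lt lam (mdist (iter t f y) w) e lam01 e0.
exists N => n Nn; rewrite iterD.
exact: le_lt_trans (mdist_iter_pieces n (iter_pieces t Cy) Cw) (hN n Nn).
Qed.

Lemma cluster_iter_period_fixed {j p z w} : (0 < p)%N -> iter p sig j = j ->
  C j z -> C j w -> cluster ((fun m => iter (m * p) f z) @ \oo) w ->
  iter p f w = w.
Proof.
move=> p0 sigj Cz Cw clw; set u := fun m => iter (m * p) f z in clw.
have Cu m : C j (u m) by apply: iter_pieces_period.
apply/eqP/negPn/negP; rewrite -mdist_gt0 => e0.
set e := mdist (iter p f w) w in e0.
have e30 : 0 < e / 3 by rewrite divr_gt0.
have [N hN] := geometric_eventually_lt lam (mdist z (iter p f z)) _ lam01 e30.
have [m Nm wm] := cluster_seq_mdist clw _ e30 N.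
have um_step : mdist (u m.+1) (u m) < e / 3.
  have Cfz : C j (iter p f z) by rewrite -{1}sigj; apply: iter_pieces.
  rewrite metric_sym /u mulSn addnC iterD.
  apply: le_lt_trans (mdist_iter_pieces _ Cz Cfz) (hN _ _).
  by rewrite (leq_trans Nm) ?leq_pmulr.
have um_w : mdist (iter p f w) (u m.+1) < e / 3.
  rewrite metric_sym /u mulSn iterD.
  apply: le_lt_trans (mdist_iter_pieces _ (Cu m) Cw) _.
  rewrite metric_sym; apply: le_lt_trans wm.
  by rewrite ler_piMl ?mdist_ge0 // exprn_ile1 //; case/andP: lam01 => ? /ltW.
rewrite metric_sym in wm.
have := metric_triangle (iter p f w) (u m.+1) w.
have := metric_triangle (u m.+1) (u m) w.
rewrite -/e; lra.
Qed.

Hypothesis X_compact : compact [set: X].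
Hypothesis C_disjoint : forall j j' a, C j a -> C j' a -> j = j'.
Context {n0 : nat}.
Hypothesis closure_iter_pieces : forall j n, (n0 <= n)%N ->
  exists j', closure (iter n f @` C j) `<=` C j'.

Lemma cluster_iter_period_mem {j p z w} : (0 < p)%N -> iter p sig j = j ->
  C j z -> cluster ((fun m => iter (m * p) f z) @ \oo) w -> C j w.
Proof.
move=> p0 sigj Cz clw; set u := fun m => iter (m * p) f z in clw.
have u_shift m : (n0 <= m)%N -> u m = iter (n0 * p) f (u (m - n0)%N).
  by move=> n0m; rewrite /u -iterD -mulnDl subnKC.
have [j' clC] := closure_iter_pieces j _ (leq_pmulr n0 p0).
have Cu m : C j (u m) by apply: iter_pieces_period.
have cl_w : closure (iter (n0 * p) f @` C j) w.
  apply/closure_mdistP => e e0; have [m n0m wm] := cluster_seq_mdist clw _ e0 n0.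
  by exists (u m) => //; rewrite u_shift //; exists (u (m - n0)%N).
suff -> : j = j' by exact: clC.
apply: (C_disjoint _ _ _ (Cu n0)); apply/clC/subset_closure.
by rewrite u_shift // subnn; exists (u 0).
Qed.

Lemma exists_periodic_point_pieces {j p z} : (0 < p)%N -> iter p sig j = j ->
  C j z -> exists2 w, C j w & iter p f w = w.
Proof.
move=> p0 sigj Cz.
have [w [_ clw]] := X_compact ((fun m => iter (m * p) f z) @ \oo) _ filterT.
have Cw := cluster_iter_period_mem p0 sigj Cz clw.
by exists w; last exact: cluster_iter_period_fixed p0 sigj Cz Cw clw.
Qed.

Lemma omega_limit_periodic_pieces j y : C j y ->
  exists2 G, periodic_orbit f G /\ G `<=` \bigcup_j C j &
    forall y', C j y' -> omega_limit f y' = G.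
Proof.
move=> Cy; have [t [p [p0 sigp]]] := iter_eventually_periodic sig j.
have [w Cw fw] := exists_periodic_point_pieces p0 sigp (iter_pieces t Cy).
exists (iter_cycle f p w); last by move=> y' Cy'; apply: omega_limit_pieces p0 Cw fw Cy'.
split; first exact: periodic_orbit_iter_cycle.
by move=> _ [s _ <-]; exists (iter s sig (iter t sig j)) => //; apply: iter_pieces.
Qed.

End pieces.

Lemma finite_range_piecewise_constant {T : Type} {k : nat} (C : 'I_k -> set T)
    (P : set T -> Prop) (L : T -> set T) :
  (forall j y, C j y -> exists2 G, P G & forall y', C j y' -> L y' = G) ->
  exists r (g : 'I_r -> set T),
    (forall l, P (g l)) /\ (forall y, (\bigcup_j C j) y -> exists l, L y = g l).
Proof.
move=> constL.
have [[j0 [y0 Cy0]]|C0] := pselect (exists j y, C j y); last first.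
  exists 0%N, (fun=> set0); split=> [[]//|y [j _ Cy]].
  by case: C0; exists j, y.
have [G0 PG0 _] := constL _ _ Cy0.
have pick j : exists G, P G /\ forall y, C j y -> L y = G.
  have [[y Cy]|Cj0] := pselect (exists y, C j y).
    by have [G PG LG] := constL _ _ Cy; exists G.
  by exists G0; split=> // y Cy; case: Cj0; exists y.
have [g gP] := choice pick.
exists k, g; split=> [l|y [j _ Cy]]; first exact: (gP l).1.
by exists j; apply: (gP j).2.
Qed.

Theorem lemma3p5 (R : realType) (X : metricType R) (lam : R)
  (hX : compact [set: X])
  (hballs : forall (x : X) (r : R), connected (ball x r))
  (hdiam : exists x y : X, 0 < mdist x y)
  (hlam : 0 < lam < 1)
  (f : X -> X) (N : nat) (A : 'I_N -> set X) (phi : 'I_N -> X -> X)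
  (hf : pc_data lam f N A phi)
  (k : nat) (C : 'I_k -> set X)
  (hCopen : forall j, open (C j))
  (hC : strongly_invariant f N A k C) :
  exists (r : nat) (g : 'I_r -> set X),
    (forall l, periodic_orbit f (g l) /\ g l `<=` \bigcup_j C j) /\
    (forall y, (\bigcup_j C j) y -> exists l, omega_limit f y = g l).
Proof.
case: hf => _ _ _ phi_lip f_phi.
case: hC => C_disj f_C [n0 [_ closure_C]] C_A.
have [sig f_sig] := choice f_C.
have [ia C_ia] := choice C_A.
have lam01 : 0 <= lam < 1 by case/andP: hlam => l0 ->; rewrite ltW.
have f_contracts j a b : C j a -> C j b -> mdist (f a) (f b) <= lam * mdist a b.
  move=> Ca Cb; rewrite (f_phi _ _ (C_ia j a Ca)) (f_phi _ _ (C_ia j b Cb)).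
  exact: (phi_lip (ia j)).1.
have C_uniq i i' x : C i x -> C i' x -> i = i'.
  move=> Cx Cx'; apply: contrapT => /eqP /C_disj C0.
  by have : (C i `&` C i') x by []; rewrite C0.
apply: (finite_range_piecewise_constant C
  (fun G => periodic_orbit f G /\ G `<=` \bigcup_j C j) (omega_limit f)).
move=> j y Cy.
exact: (omega_limit_periodic_pieces lam01 f_sig f_contracts hX C_uniq closure_C j y Cy).
Qed.
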